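(* Let $G$ be a graph with a Hamilton path $L=x_0x_1\ldots x_p$. Then there is a bond of $G$ meeting every path of $G$ of length at least $\lceil (p+1)/2\rceil$.
   Context: All graphs are finite, simple and undirected. A Hamilton path is a path containing every vertex of the graph. The length of a path is its number of edges. A bond of $G$ is a minimal nonempty edge-cut, where an edge-cut is a set of edges of the form $\{xy\in E(G): x\in X, y\in V(G)\setminus X\}$ for some $X\subseteq V(G)$. A set of edges meets a path if the path contains at least one edge of the set. *)

(* A finite simple graph is a symmetric irreflexive relation
   e : rel T on a finType T; an edge xy is represented as the 2-element set [set x; y]. *)
From mathcomp Require Import all_boot.
Set Implicit Arguments. Unset Strict Implicit. Unset Printing Implicit Defensive.

Section Graph.
Variables (T : finType) (e : rel T).

Definition edge_cut (X : {set T}) : {set {set T}} :=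
  [set [set x; y] | x in X, y in ~: X & e x y].

Definition is_edge_cut (F : {set {set T}}) : Prop :=
  exists X : {set T}, F = edge_cut X.

Definition is_bond (F : {set {set T}}) : Prop :=
  [/\ is_edge_cut F, F != set0 &
      forall F', is_edge_cut F' -> F' != set0 -> F' \subset F -> F' = F].

(* a path x :: s : consecutive vertices adjacent, all vertices distinct;
   its length is size s (number of edges) *)
Definition is_gpath (x : T) (s : seq T) : bool := path e x s && uniq (x :: s).

Definition meets (F : {set {set T}}) (x : T) (s : seq T) : bool :=
  has (fun uv : T * T => [set uv.1; uv.2] \in F) (zip (x :: s) s).

Definition hamilton_path (x : T) (s : seq T) : Prop :=
  is_gpath x s /\ forall v : T, v \in x :: s.

End Graph.

(* Split the Hamilton path x0 ... xp into its first half X and its second half.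
   Both halves are traced by subpaths of the Hamilton path, so each side of the
   edge-cut of X induces a connected subgraph; this makes the cut a bond, since a
   nonempty edge-cut contained in it must separate the same two sides.  A path
   avoiding the cut stays on one side, so it has at most ceil((p+1)/2) vertices
   and hence length less than ceil((p+1)/2). *)
From mathcomp Require Import all_boot zify.
Set Implicit Arguments. Unset Strict Implicit. Unset Printing Implicit Defensive.

Lemma sorted_connect (T : finType) (r : rel T) (r_sym : symmetric r) s :
  sorted r s -> {in s &, forall u v, connect r u v}.
Proof.
case: s => [//|x p] xp u v /(path_connect xp) xu /(path_connect xp) xv.
by apply: connect_trans xv; rewrite (sym_connect_sym r_sym).
Qed.

Section EdgeCut.
Variables (T : finType) (e : rel T).
Hypothesis e_sym : symmetric e.

Lemma edge_cutP (X : {set T}) f :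
  reflect (exists u v, [/\ e u v, (u \in X) != (v \in X) & f = [set u; v]])
          (f \in edge_cut e X).
Proof.
apply: (iffP imset2P) => [[u v uX] | [u [v [euv uvX ->]]]].
  by rewrite inE in_setC => /andP[vX euv] ->; exists u, v; rewrite uX vX.
case uX: (u \in X) uvX; case vX: (v \in X) => // _.
  by exists u v; rewrite // inE in_setC vX.
by exists v u; rewrite 1?setUC // inE in_setC uX e_sym.
Qed.

Lemma mem_edge_cut (X : {set T}) u v :
  e u v -> ([set u; v] \in edge_cut e X) = ((u \in X) != (v \in X)).
Proof.
move=> euv; apply/edge_cutP/idP => [[a [b [_ abX uv_ab]]] | uvX]; last by exists u, v.
move: (set21 a b) (set22 a b) abX; rewrite -uv_ab => /set2P[]-> /set2P[]->;
  by rewrite ?eqxx //= eq_sym.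
Qed.

Lemma edge_cutC (X : {set T}) : edge_cut e (~: X) = edge_cut e X.
Proof.
apply/setP=> f; apply/edge_cutP/edge_cutP => -[u [v [euv uvX ->]]];
  by exists u, v; move: uvX; rewrite !in_setC; case: (u \in X); case: (v \in X).
Qed.

Definition inner_edge (X : {set T}) : rel T :=
  [rel u v | e u v && ((u \in X) == (v \in X))].

Lemma inner_edge_sym (X : {set T}) : symmetric (inner_edge X).
Proof. by move=> u v; rewrite /inner_edge /= e_sym eq_sym. Qed.

Lemma path_inner_edge (X : {set T}) y s :
  path e y s -> ~~ meets (edge_cut e X) y s -> path (inner_edge X) y s.
Proof.
elim: s y => [//|z s IHs] y /= /andP[eyz zs].
rewrite /meets /= negb_or (mem_edge_cut _ eyz) negbK => /andP[yzX nm].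
by apply/andP; split; [apply/andP | exact: IHs].
Qed.

Lemma avoiding_path_side (X : {set T}) y s :
  path e y s -> ~~ meets (edge_cut e X) y s -> {in y :: s, forall v, (v \in X) = (y \in X)}.
Proof.
move=> ys nm v /(path_connect (path_inner_edge ys nm)) yv; symmetry.
by apply: closed_connect yv => u w /andP[_ /eqP].
Qed.

Lemma avoiding_gpath_size (X : {set T}) y s :
  is_gpath e y s -> ~~ meets (edge_cut e X) y s -> size (y :: s) <= maxn #|X| #|~: X|.
Proof.
case/andP=> ys ys_uniq nm; have side := avoiding_path_side ys nm.
move/card_uniqP: ys_uniq => <-; case yX: (y \in X).
  apply: leq_trans (leq_maxl _ _); apply/subset_leq_card/subsetP => v.
  by move/side; rewrite yX.
apply: leq_trans (leq_maxr _ _); apply/subset_leq_card/subsetP => v.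
by move/side; rewrite inE yX => ->.
Qed.

Lemma sorted_side_connect (X : {set T}) (b : bool) s :
  sorted e s -> {in s, forall v, (v \in X) = b} ->
  {in s &, forall u v, connect (inner_edge X) u v}.
Proof.
move=> s_sorted sX; apply: sorted_connect; first exact: inner_edge_sym.
apply: (@sub_in_sorted _ [pred v | (v \in X) == b]) s_sorted.
- by move=> u v /eqP uX /eqP vX euv; apply/andP; rewrite uX vX.
- by apply/allP => v /sX /= ->.
Qed.

Lemma edge_cut_bond (X : {set T}) :
  edge_cut e X != set0 ->
  (forall u v, (u \in X) = (v \in X) -> connect (inner_edge X) u v) ->
  is_bond e (edge_cut e X).
Proof.
move=> cut_n0 X_conn; split=> //; first by exists X.
move=> _ [Y ->] /set0Pn[f /edge_cutP[u [v [euv uvY _]]]] sub_YX.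
have Y_closed : closed (inner_edge X) Y.
  move=> a b /andP[eab abX]; apply/eqP; apply: contraTT abX => abY.
  by rewrite -mem_edge_cut // (subsetP sub_YX) // mem_edge_cut.
have sameXY a b : (a \in X) = (b \in X) -> (a \in Y) = (b \in Y).
  by move/X_conn; apply: closed_connect.
have uvX : (u \in X) != (v \in X) by apply: contra uvY => /eqP/sameXY->.
have Y_def w : (w \in Y) = (w \in X) (+) ((u \in X) (+) (u \in Y)).
  have [wu | wv] : (w \in X) = (u \in X) \/ (w \in X) = (v \in X).
    by move: uvX; case: (w \in X); case: (u \in X); case: (v \in X); auto.
  by rewrite (sameXY _ _ wu) wu addbA addbb.
  rewrite (sameXY _ _ wv) wv; move: uvX uvY.
  by case: (u \in X); case: (v \in X); case: (u \in Y); case: (v \in Y).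
case: ((u \in X) (+) (u \in Y)) Y_def => Y_def; first rewrite -[RHS]edge_cutC;
  by congr (edge_cut e _); apply/setP=> w; rewrite Y_def ?inE ?addbT ?addbF.
Qed.

End EdgeCut.

Section HamiltonPrefixCut.
Variables (T : finType) (e : rel T) (P : seq T) (k : nat).
Hypotheses (e_sym : symmetric e) (P_sorted : sorted e P) (P_uniq : uniq P).
Hypotheses (P_cover : forall v, v \in P) (k_gt0 : 0 < k) (k_lt : k < size P).

Lemma mem_drop_prefix v : (v \in drop k P) = (v \notin take k P).
Proof.
move: P_uniq (P_cover v); rewrite -{1 2}(cat_take_drop k P) cat_uniq mem_cat.
case/and3P=> _ disjoint_halves _; case: (boolP (v \in take k P)) => //= vt _.
by apply: contraNF disjoint_halves => vd; apply/hasP; exists v.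
Qed.

Lemma card_prefix : #|[set v in take k P]| = k.
Proof.
by rewrite cardsE; move/card_uniqP: (take_uniq k P_uniq) => ->; rewrite size_take k_lt.
Qed.

Lemma card_prefixC : #|~: [set v in take k P]| = size P - k.
Proof.
have -> : ~: [set v in take k P] = [set v in drop k P].
  by apply/setP=> v; rewrite !inE mem_drop_prefix.
by rewrite cardsE; move/card_uniqP: (drop_uniq k P_uniq) => ->; rewrite size_drop.
Qed.

Lemma prefix_cut_bond : is_bond e (edge_cut e [set v in take k P]).
Proof.
set X := [set v in take k P].
have [take_sorted drop_sorted] : sorted e (take k P) * sorted e (drop k P).
  by apply: cat_sorted2; rewrite cat_take_drop.
have X_drop v : (v \in X) = (v \notin drop k P) by rewrite inE mem_drop_prefix negbK.
apply: edge_cut_bond => // [|u v uvX].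
  (* The Hamilton path starts in X and leaves it, so it meets the cut. *)
  have [x [p P_xp]] : exists x p, P = x :: p by case: P k_lt => // x p; exists x, p.
  have xX : x \in X by rewrite inE P_xp -(prednK k_gt0) /= inE eqxx.
  have [w wd] : exists w, w \in drop k P.
    by exists (nth x (drop k P) 0); rewrite mem_nth // size_drop subn_gt0.
  have wP : w \in x :: p by rewrite -P_xp (mem_drop wd).
  have xp : path e x p by move: P_sorted; rewrite P_xp.
  have [/hasP[[a b] _ abX] | nm] := boolP (meets (edge_cut e X) x p).
    by apply/set0Pn; exists [set a; b].
  by have := avoiding_path_side e_sym xp nm wP; rewrite xX X_drop wd.
have X_take w : (w \in X) = (w \in take k P) by rewrite inE.
have [ut | ut] := boolP (u \in take k P).
  have vt : v \in take k P by rewrite -X_take -uvX X_take.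
  apply: (@sorted_side_connect _ _ e_sym X true _ take_sorted) => // w wt.
  by rewrite X_take wt.
have [ud vd] : u \in drop k P /\ v \in drop k P.
  by rewrite !mem_drop_prefix -!X_take -uvX X_take.
apply: (@sorted_side_connect _ _ e_sym X false _ drop_sorted) => // w wd.
by rewrite X_drop wd.
Qed.

End HamiltonPrefixCut.

Theorem lemma5 (T : finType) (e : rel T) (e_sym : symmetric e) (e_irr : irreflexive e)
  (x0 : T) (L : seq T) (HL : hamilton_path e x0 L) (Hp : 0 < size L) :
  exists F : {set {set T}}, is_bond e F /\
    forall (y : T) (s : seq T), is_gpath e y s ->
      uphalf (size L).+1 <= size s -> meets F y s.
Proof.
case: HL => /andP[L_path L_uniq] L_cover.
set n := (size L).+1; set k := n./2.
have halves := odd_double_half n.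
have k_gt0 : 0 < k by rewrite /k /n; lia.
have k_lt : k < size (x0 :: L) by rewrite /k /n /=; lia.
exists (edge_cut e [set v in take k (x0 :: L)]); split.
  exact: prefix_cut_bond.
move=> y s ys; apply: contraLR => avoid; rewrite -ltnNge.
apply: leq_trans (avoiding_gpath_size e_sym ys avoid) _.
rewrite card_prefix // card_prefixC // uphalf_half /k.
change (size (x0 :: L)) with n; lia.
Qed.
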